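(* Let $\eta\in(0,1)$ and let $\mathbf{u}_T\in\mathbb{R}^{d_x}$, $\mathbf{v}_T\in\mathbb{R}^{d_y}$ be nonzero. If $\frac1{\sqrt2}\cdot\frac{\mathbf{u}^{*\top}\Sigma_{xx}\mathbf{u}_T+\mathbf{v}^{*\top}\Sigma_{yy}\mathbf{v}_T}{\sqrt{\mathbf{u}_T^\top\Sigma_{xx}\mathbf{u}_T+\mathbf{v}_T^\top\Sigma_{yy}\mathbf{v}_T}}\ge1-\frac\eta4,$ then $\mathrm{align}((\mathbf{u}_T,\mathbf{v}_T);(\mathbf{u}^*,\mathbf{v}^* ))=\frac12\Big(\frac{\mathbf{u}^{*\top}\Sigma_{xx}\mathbf{u}_T}{\sqrt{\mathbf{u}_T^\top\Sigma_{xx}\mathbf{u}_T}}+\frac{\mathbf{v}^{*\top}\Sigma_{yy}\mathbf{v}_T}{\sqrt{\mathbf{v}_T^\top\Sigma_{yy}\mathbf{v}_T}}\Big)\ge1-\eta.$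
   Context: $\Sigma_{xx}\in\mathbb{R}^{d_x\times d_x}$, $\Sigma_{yy}\in\mathbb{R}^{d_y\times d_y}$ are positive definite (population auto-covariances of zero-mean random vectors $\mathbf{x},\mathbf{y}$), $\Sigma_{xy}$ the cross-covariance, $\mathbf{T}=\Sigma_{xx}^{-1/2}\Sigma_{xy}\Sigma_{yy}^{-1/2}$ with unit top singular vector pair $(\mathbf{a}_1,\mathbf{b}_1)$, and $(\mathbf{u}^*,\mathbf{v}^* )=(\Sigma_{xx}^{-1/2}\mathbf{a}_1,\Sigma_{yy}^{-1/2}\mathbf{b}_1)$, so that $\mathbf{u}^{*\top}\Sigma_{xx}\mathbf{u}^*=\mathbf{v}^{*\top}\Sigma_{yy}\mathbf{v}^*=1$. *)

From HB Require Import structures.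
From mathcomp Require Import all_boot all_order all_algebra.
Set Implicit Arguments. Unset Strict Implicit. Unset Printing Implicit Defensive.
Import Order.TTheory GRing.Theory Num.Theory.
Local Open Scope ring_scope.

Definition bform (R : rcfType) (n : nat) (x : 'cV[R]_n) (S : 'M[R]_n) (y : 'cV[R]_n) : R :=
  (x^T *m S *m y) 0 0.

Definition bil (R : rcfType) (m n : nat) (a : 'cV[R]_m) (M : 'M[R]_(m, n)) (b : 'cV[R]_n) : R :=
  (a^T *m M *m b) 0 0.

Definition posdef (R : rcfType) (n : nat) (S : 'M[R]_n) : Prop :=
  S^T = S /\ forall x : 'cV[R]_n, x != 0 -> 0 < bform x S x.

Definition is_inv_sqrt (R : rcfType) (n : nat) (S H : 'M[R]_n) : Prop :=
  posdef H /\ H *m H = invmx S.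

Definition unitv (R : rcfType) (n : nat) (a : 'cV[R]_n) : Prop := (a^T *m a) 0 0 = 1.

Definition top_singular_pair (R : rcfType) (m n : nat) (T : 'M[R]_(m, n))
    (a : 'cV[R]_m) (b : 'cV[R]_n) : Prop :=
  unitv a /\ unitv b /\
  exists s : R, 0 <= s /\ T *m b = s *: a /\ T^T *m a = s *: b /\
    (forall (a' : 'cV[R]_m) (b' : 'cV[R]_n), unitv a' -> unitv b' -> bil a' T b' <= s).

Definition align (R : rcfType) (dx dy : nat) (Sxx : 'M[R]_dx) (Syy : 'M[R]_dy)
    (u : 'cV[R]_dx) (v : 'cV[R]_dy) (us : 'cV[R]_dx) (vs : 'cV[R]_dy) : R :=
  2^-1 * (bform us Sxx u / Num.sqrt (bform u Sxx u)
          + bform vs Syy v / Num.sqrt (bform v Syy v)).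

(** Write [p = u*' Sxx uT], [a^2 = uT' Sxx uT] and [q], [b] likewise. Since [u*] has
    unit [Sxx]-norm, Cauchy-Schwarz in the [Sxx]-inner product gives [p <= a], and
    likewise [q <= b]. The hypothesis says [p + q >= (1 - eta/4) sqrt (2 (a^2 + b^2))],
    so the total deficit [(a - p) + (b - q)] is small compared to [min a b], which
    bounds the deficit [(1 - p/a) + (1 - q/b)] of the align quantity. *)
From HB Require Import structures.
From mathcomp Require Import all_boot all_order all_algebra.
From mathcomp Require Import ring lra.
Set Implicit Arguments. Unset Strict Implicit. Unset Printing Implicit Defensive.
Import Order.TTheory GRing.Theory Num.Theory.
Local Open Scope ring_scope.

Lemma sqr_deficit_le (R : realFieldType) (a b e : R) : 0 <= b <= a -> 0 <= e <= 1 ->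
  (a + (1 - 2 * e) * b) ^+ 2 <= (1 - e / 4) ^+ 2 * (2 * (a ^+ 2 + b ^+ 2)).
Proof.
move=> /andP[b0 ba] /andP[e0 e1].
(* The difference of the two sides is exactly T1 + T2 + T3, all three being nonnegative. *)
have e2 : 0 <= e ^+ 2 := sqr_ge0 e.
have T1 : 0 <= e * (6 - 15 * e / 4) * b ^+ 2 by rewrite !mulr_ge0 ?sqr_ge0 //; lra.
have T2 : 0 <= (2 * e + e ^+ 2 / 4) * (b * (a - b)) by rewrite !mulr_ge0 //; lra.
have T3 : 0 <= (1 - e + e ^+ 2 / 8) * (a - b) ^+ 2 by rewrite mulr_ge0 ?sqr_ge0 //; lra.
lra.
Qed.

Lemma ratio_sum_ge_wlog (R : realFieldType) (a b s p q e : R) :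
  0 < b <= a -> 0 <= s -> s ^+ 2 = 2 * (a ^+ 2 + b ^+ 2) ->
  p <= a -> q <= b -> 0 <= e <= 1 ->
  (1 - e / 4) * s <= p + q -> 2 - 2 * e <= p / a + q / b.
Proof.
move=> /andP[b0 ba] s0 sE pa qb /andP[e0 e1] hyp.
have a0 : 0 < a := lt_le_trans b0 ba.
have deficit_root : a + (1 - 2 * e) * b <= (1 - e / 4) * s.
  have lhs0 : 0 <= a + (1 - 2 * e) * b by nra.
  have rhs0 : 0 <= (1 - e / 4) * s by rewrite mulr_ge0 //; lra.
  rewrite -ler_sqr ?nnegrE // exprMn sE sqr_deficit_le ?e0 ?e1 //.
  by rewrite ba ltW.
have deficit : (a - p + (b - q)) / b <= 2 * e by rewrite ler_pdivrMr //; lra.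
have hp : 1 - (a - p) / b <= p / a.
  have : (a - p) / a <= (a - p) / b.
    by rewrite ler_wpM2l ?subr_ge0 // lef_pV2 ?posrE.
  have -> : (a - p) / a = 1 - p / a by field; rewrite lt0r_neq0.
  lra.
have -> : q / b = 1 - (b - q) / b by field; rewrite lt0r_neq0.
rewrite mulrDl in deficit; lra.
Qed.

Lemma ratio_sum_ge (R : realFieldType) (a b s p q e : R) :
  0 < a -> 0 < b -> 0 <= s -> s ^+ 2 = 2 * (a ^+ 2 + b ^+ 2) ->
  p <= a -> q <= b -> 0 <= e <= 1 ->
  (1 - e / 4) * s <= p + q -> 2 - 2 * e <= p / a + q / b.
Proof.
move=> a0 b0 s0 sE pa qb e01 hyp; have [ba|/ltW ab] := lerP b a.
  by apply: (ratio_sum_ge_wlog _ s0 sE pa qb e01 hyp); rewrite b0.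
rewrite [p / a + _]addrC; apply: (ratio_sum_ge_wlog _ s0 _ qb pa e01).
- by rewrite a0.
- by rewrite sE [b ^+ 2 + _]addrC.
- by rewrite [q + _]addrC.
Qed.

Lemma half_ratio_sum_sqrt_ge (R : rcfType) (A B p q e : R) :
  0 < A -> 0 < B -> p <= Num.sqrt A -> q <= Num.sqrt B -> 0 <= e <= 1 ->
  1 - e / 4 <= (Num.sqrt 2)^-1 * ((p + q) / Num.sqrt (A + B)) ->
  1 - e <= 2^-1 * (p / Num.sqrt A + q / Num.sqrt B).
Proof.
move=> A0 B0 pa qb e01 hyp.
have AB0 : 0 < A + B := addr_gt0 A0 B0.
have s0 : 0 < Num.sqrt 2 * Num.sqrt (A + B) by rewrite mulr_gt0 ?sqrtr_gt0.
have sE : (Num.sqrt 2 * Num.sqrt (A + B)) ^+ 2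
          = 2 * (Num.sqrt A ^+ 2 + Num.sqrt B ^+ 2).
  by rewrite exprMn !sqr_sqrtr ?ltW.
have hyp' : (1 - e / 4) * (Num.sqrt 2 * Num.sqrt (A + B)) <= p + q.
  by rewrite -ler_pdivlMr // invfM mulrCA.
have a0 : 0 < Num.sqrt A by rewrite sqrtr_gt0.
have b0 : 0 < Num.sqrt B by rewrite sqrtr_gt0.
have := ratio_sum_ge a0 b0 (ltW s0) sE pa qb e01 hyp'; lra.
Qed.

Section PosdefForm.

Variables (R : rcfType) (n : nat).
Implicit Types (S H : 'M[R]_n) (x y z : 'cV[R]_n).

Lemma bformDl S x y z : bform (x + y) S z = bform x S z + bform y S z.
Proof. by rewrite /bform raddfD !mulmxDl mxE. Qed.

Lemma bformZl S (k : R) x z : bform (k *: x) S z = k * bform x S z.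
Proof. by rewrite /bform linearZ -!scalemxAl mxE. Qed.

Lemma bformDr S x y z : bform z S (x + y) = bform z S x + bform z S y.
Proof. by rewrite /bform mulmxDr mxE. Qed.

Lemma bformZr S (k : R) x z : bform z S (k *: x) = k * bform z S x.
Proof. by rewrite /bform -scalemxAr mxE. Qed.

Lemma bform_sym S x y : S^T = S -> bform x S y = bform y S x.
Proof.
move=> sS; have scalar_tr (M : 'M[R]_1) : M 0 0 = M^T 0 0 by rewrite mxE.
by rewrite /bform scalar_tr !trmx_mul trmxK sS mulmxA.
Qed.

Lemma bform_ge0 S x : posdef S -> 0 <= bform x S x.
Proof.
move=> [_ pS]; have [->|x0] := eqVneq x 0; last exact: ltW (pS _ x0).
by rewrite /bform mulmx0 mxE.
Qed.

Lemma bform_cauchy_schwarz S x y : posdef S ->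
  bform x S y ^+ 2 <= bform x S x * bform y S y.
Proof.
move=> pS; have [->|y0] := eqVneq y 0.
  by rewrite /bform !mulmx0 !mxE expr2 !mulr0.
set Y := bform y S y; set c := bform x S y.
have Y0 : 0 < Y by apply: pS.2.
have := bform_ge0 (Y *: x + (- c) *: y) pS.
rewrite !(bformDl, bformZl, bformDr, bformZr) (bform_sym y x pS.1) -/Y -/c => h.
have : 0 <= Y * (Y * bform x S x - c ^+ 2) by nra.
by rewrite pmulr_rge0 // subr_ge0 mulrC.
Qed.

Lemma bform_le_sqrt S x y : posdef S -> bform y S y = 1 ->
  bform y S x <= Num.sqrt (bform x S x).
Proof.
move=> pS y1; have := bform_cauchy_schwarz y x pS.
rewrite y1 mul1r -{1}(sqr_sqrtr (bform_ge0 x pS)) => cs.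
have := sqrtr_ge0 (bform x S x); nra.
Qed.

Lemma posdef_unitmx S : posdef S -> S \in unitmx.
Proof.
move=> [_ pS]; rewrite unitmxE unitfE; apply/negP => /det0P[v v0 vS0].
have := pS v^T; rewrite trmx_eq0 => /(_ v0).
by rewrite /bform trmxK vS0 mul0mx mxE ltxx.
Qed.

Lemma inv_sqrt_conj S H : posdef S -> is_inv_sqrt S H -> H *m S *m H = 1%:M.
Proof.
move=> /posdef_unitmx Su [_ HH]; apply: mulmx1C.
by rewrite mulmxA HH mulVmx.
Qed.

Lemma bform_inv_sqrt_unitv S H (a : 'cV[R]_n) : posdef S -> is_inv_sqrt S H ->
  unitv a -> bform (H *m a) S (H *m a) = 1.
Proof.
move=> pS iH a1; have [[sH _] _] := iH; rewrite /bform.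
have -> : (H *m a)^T *m S *m (H *m a) = a^T *m (H *m S *m H) *m a.
  by rewrite trmx_mul sH !mulmxA.
by rewrite inv_sqrt_conj // mulmx1.
Qed.

End PosdefForm.

Theorem lemma9 (R : rcfType) (dx dy : nat)
    (Sxx : 'M[R]_dx) (Syy : 'M[R]_dy) (Sxy : 'M[R]_(dx, dy))
    (Hx : 'M[R]_dx) (Hy : 'M[R]_dy) (a1 : 'cV[R]_dx) (b1 : 'cV[R]_dy)
    (eta : R) (uT : 'cV[R]_dx) (vT : 'cV[R]_dy) :
  posdef Sxx -> posdef Syy ->
  is_inv_sqrt Sxx Hx -> is_inv_sqrt Syy Hy ->
  top_singular_pair (Hx *m Sxy *m Hy) a1 b1 ->
  0 < eta < 1 ->
  uT != 0 -> vT != 0 ->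
  let us := Hx *m a1 in
  let vs := Hy *m b1 in
  1 - eta / 4 <=
    (Num.sqrt 2)^-1 * ((bform us Sxx uT + bform vs Syy vT)
                        / Num.sqrt (bform uT Sxx uT + bform vT Syy vT)) ->
  1 - eta <= align Sxx Syy uT vT us vs.
Proof.
move=> pX pY iX iY [a1_unit [b1_unit _]] /andP[eta0 eta1] uT0 vT0 us vs hyp.
apply: (half_ratio_sum_sqrt_ge _ _ _ _ _ hyp).
- exact: pX.2.
- exact: pY.2.
- exact/bform_le_sqrt/bform_inv_sqrt_unitv.
- exact/bform_le_sqrt/bform_inv_sqrt_unitv.
- by rewrite !ltW.
Qed.
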